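(* Let $f:[0,1]\to\mathbb{R}$ be bounded and let $0<a<1$. Assume that $f(t)=c$ for all $t\in(a,1]$, for some real constant $c$. Then for every $n\in\mathbb{N}$ and every $x\in(a,1)$, \[ |B_nf(x)-f(x)|\leq \|f-c\|\,e^{-nr(x,a)}. \]
   Context: For a bounded function $f:[0,1]\to\mathbb{R}$, $\|f\|=\sup_{t\in[0,1]}|f(t)|$, and $\|f-c\|$ is the supremum norm of $t\mapsto f(t)-c$. The $n$th Bernstein polynomial of $f$ is $B_nf(x)=\sum_{j=0}^n f(j/n)\binom{n}{j}x^j(1-x)^{n-j}$, $x\in[0,1]$. For $x,\theta\in(0,1)$, $r(x,\theta)=\theta\log\frac{\theta}{x}+(1-\theta)\log\frac{1-\theta}{1-x}$. *)

From Stdlib Require Import Reals Lra.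
From Coquelicot Require Import Coquelicot.
Open Scope R_scope.

Definition bernstein (n : nat) (f : R -> R) (x : R) : R :=
  sum_f_R0 (fun j => f (INR j / INR n) * Binomial.C n j * x ^ j * (1 - x) ^ (n - j)) n.

(* sup-norm on [0,1] of t |-> f t - c, as the (finite, for bounded f) supremum *)
Definition supnorm_shift (f : R -> R) (c : R) : R :=
  real (Lub_Rbar (fun y => exists t, 0 <= t <= 1 /\ y = Rabs (f t - c))).

Definition rfun (x theta : R) : R :=
  theta * ln (theta / x) + (1 - theta) * ln ((1 - theta) / (1 - x)).

(* Write c = f(x) and expand B_n f(x) - c = sum_j (f(j/n) - c) p_j(x) in the Bernstein basis.
   Only the indices j <= n a contribute, and for them
   |f(j/n) - c| <= ||f - c|| e^{l (n a - j)} for every l >= 0.  Summing against the basis turns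
   the tilt e^{-l j} into the binomial expression e^{l n a} (x e^{-l} + 1 - x)^n (a Chernoff
   bound), and the optimal tilt l = ln (x (1 - a) / (a (1 - x))) makes it e^{-n r(x, a)}. *)
From Stdlib Require Import Reals Lra Lia.
From Coquelicot Require Import Coquelicot.
Open Scope R_scope.

Definition bernstein_basis (n j : nat) (x : R) : R :=
  Binomial.C n j * x ^ j * (1 - x) ^ (n - j).

Lemma bernstein_basis_ge0 (n j : nat) (x : R) :
  0 <= x <= 1 -> 0 <= bernstein_basis n j x.
Proof.
  intros Hx. unfold bernstein_basis, Binomial.C.
  repeat apply Rmult_le_pos; try (apply pow_le; lra).
  - apply pos_INR.
  - left. apply Rinv_0_lt_compat, Rmult_lt_0_compat; apply INR_fact_lt_0.
Qed.

Lemma sum_pow_bernstein_basis (n : nat) (q x : R) :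
  sum_f_R0 (fun j => q ^ j * bernstein_basis n j x) n = (x * q + (1 - x)) ^ n.
Proof.
  rewrite binomial. apply sum_eq. intros j _.
  unfold bernstein_basis. rewrite Rpow_mult_distr. ring.
Qed.

Lemma bernstein_sub_const (n : nat) (f : R -> R) (c x : R) :
  bernstein n f x - c = bernstein n (fun t => f t - c) x.
Proof.
  assert (Hunit : sum_f_R0 (fun j => bernstein_basis n j x) n = 1).
  { transitivity (sum_f_R0 (fun j => 1 ^ j * bernstein_basis n j x) n).
    - apply sum_eq. intros j _. rewrite pow1. ring.
    - rewrite sum_pow_bernstein_basis. replace (x * 1 + (1 - x)) with 1 by ring. apply pow1. }
  rewrite <- (Rmult_1_r c) at 1. rewrite <- Hunit, scal_sum.
  unfold bernstein. rewrite <- minus_sum.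
  apply sum_eq. intros j _. unfold bernstein_basis. ring.
Qed.

Lemma Rabs_bernstein_le (n : nat) (g : R -> R) (h : nat -> R) (x : R) :
  0 <= x <= 1 ->
  (forall j, (j <= n)%nat -> Rabs (g (INR j / INR n)) <= h j) ->
  Rabs (bernstein n g x) <= sum_f_R0 (fun j => h j * bernstein_basis n j x) n.
Proof.
  intros Hx Hh. eapply Rle_trans; [apply sum_f_R0_triangle|].
  apply sum_Rle. intros j Hj.
  replace (g (INR j / INR n) * Binomial.C n j * x ^ j * (1 - x) ^ (n - j))
    with (g (INR j / INR n) * bernstein_basis n j x)
    by (unfold bernstein_basis; ring).
  rewrite Rabs_mult, (Rabs_pos_eq (bernstein_basis n j x))
    by (apply bernstein_basis_ge0; exact Hx).
  apply Rmult_le_compat_r; [apply bernstein_basis_ge0; exact Hx | apply Hh; exact Hj].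
Qed.

(* For [n = 0] the only node is [j = 0], and [0 / 0 = 0] in [R]. *)
Lemma bernstein_node_bounds (n j : nat) :
  (j <= n)%nat -> 0 <= INR j / INR n <= 1.
Proof.
  intros Hj. destruct n as [|n].
  - replace j with 0%nat by lia. unfold Rdiv. rewrite Rmult_0_l. lra.
  - assert (Hn : 0 < INR (S n)) by (apply lt_0_INR; lia).
    assert (HjI : INR j <= INR (S n)) by (apply le_INR; exact Hj).
    split.
    + apply Rdiv_le_0_compat; [apply pos_INR | exact Hn].
    + apply (Rdiv_le_1 _ _ Hn), HjI.
Qed.

Lemma bernstein_node_le (n j : nat) (a : R) :
  (j <= n)%nat -> INR j / INR n <= a -> INR j <= INR n * a.
Proof.
  intros Hj Hle. destruct n as [|n].
  - replace j with 0%nat by lia. simpl. lra.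
  - assert (Hn : 0 < INR (S n)) by (apply lt_0_INR; lia).
    rewrite Rmult_comm. apply (Rle_div_l _ _ _ Hn), Hle.
Qed.

Lemma exp_pow (y : R) (k : nat) : exp y ^ k = exp (INR k * y).
Proof.
  induction k as [|k IH].
  - simpl. rewrite Rmult_0_l, exp_0. reflexivity.
  - rewrite S_INR. simpl. rewrite IH, <- exp_plus. f_equal. ring.
Qed.

Lemma bernstein_chernoff (n : nat) (g : R -> R) (a S l x : R) :
  0 <= x <= 1 -> 0 <= l ->
  (forall t, 0 <= t <= 1 -> Rabs (g t) <= S) ->
  (forall t, a < t <= 1 -> g t = 0) ->
  Rabs (bernstein n g x) <= S * (exp (l * INR n * a) * (x * exp (- l) + (1 - x)) ^ n).
Proof.
  intros Hx Hl HS Hg.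
  assert (HS0 : 0 <= S) by (apply Rle_trans with (Rabs (g 0)); [apply Rabs_pos | apply HS; lra]).
  eapply Rle_trans.
  { apply (Rabs_bernstein_le n g (fun j => S * exp (l * INR n * a) * exp (- l) ^ j) x Hx).
    intros j Hj.
    pose proof (bernstein_node_bounds n j Hj) as Hnode.
    rewrite exp_pow, Rmult_assoc, <- exp_plus.
    destruct (Rle_or_lt (INR j / INR n) a) as [Hle | Hgt].
    - assert (Htilt : 1 <= exp (l * INR n * a + INR j * - l)).
      { pose proof (bernstein_node_le n j a Hj Hle).
        eapply Rle_trans; [|apply exp_ineq1_le].
        assert (0 <= l * (INR n * a - INR j)) by (apply Rmult_le_pos; lra).
        lra. }
      rewrite <- (Rmult_1_r (Rabs _)).
      apply Rmult_le_compat; [apply Rabs_pos | lra | apply HS; exact Hnode | exact Htilt].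
    - rewrite Hg, Rabs_R0 by lra.
      apply Rmult_le_pos; [exact HS0 | left; apply exp_pos]. }
  right. rewrite <- sum_pow_bernstein_basis, !scal_sum.
  apply sum_eq. intros j _. ring.
Qed.

Lemma Rabs_sub_le_supnorm_shift (f : R -> R) (c : R) :
  (exists M, forall t, 0 <= t <= 1 -> Rabs (f t) <= M) ->
  forall t, 0 <= t <= 1 -> Rabs (f t - c) <= supnorm_shift f c.
Proof.
  intros [M HM] t Ht. unfold supnorm_shift.
  set (E := fun y => exists t, 0 <= t <= 1 /\ y = Rabs (f t - c)).
  destruct (Lub_Rbar_correct E) as [Hub Hlub].
  assert (HubM : is_ub_Rbar E (M + Rabs c)).
  { intros y [s [Hs ->]]. simpl.
    eapply Rle_trans; [apply Rabs_triang|].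
    rewrite Rabs_Ropp. specialize (HM s Hs). lra. }
  specialize (Hlub _ HubM).
  assert (Et : E (Rabs (f t - c))) by (exists t; split; auto).
  specialize (Hub _ Et).
  destruct (Lub_Rbar E); simpl in *; tauto.
Qed.

Lemma chernoff_optimal_tilt (n : nat) (a x : R) :
  0 < a < 1 -> 0 < x < 1 ->
  let l := ln (x * (1 - a) / (a * (1 - x))) in
  exp (l * INR n * a) * (x * exp (- l) + (1 - x)) ^ n = exp (- INR n * rfun x a).
Proof.
  intros Ha Hx l.
  assert (Hodds : 0 < x * (1 - a) / (a * (1 - x))).
  { apply Rdiv_lt_0_compat; apply Rmult_lt_0_compat; lra. }
  assert (Hbase : x * exp (- l) + (1 - x) = exp (ln ((1 - x) / (1 - a)))).
  { unfold l. rewrite exp_Ropp, !exp_ln by (try exact Hodds; apply Rdiv_lt_0_compat; lra).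
    field. repeat split; lra. }
  rewrite Hbase, exp_pow, <- exp_plus. f_equal.
  unfold l, rfun. rewrite !ln_div by (try apply Rmult_lt_0_compat; lra).
  rewrite !ln_mult by lra. ring.
Qed.

Theorem corollary2 (f : R -> R) (a c : R)
  (Hbdd : exists M, forall t, 0 <= t <= 1 -> Rabs (f t) <= M)
  (Ha : 0 < a < 1)
  (Hc : forall t, a < t <= 1 -> f t = c) :
  forall (n : nat) (x : R), a < x < 1 ->
    Rabs (bernstein n f x - f x) <= supnorm_shift f c * exp (- INR n * rfun x a).
Proof.
  intros n x Hx.
  rewrite (Hc x), bernstein_sub_const by lra.
  rewrite <- (chernoff_optimal_tilt n a x) by lra.
  apply bernstein_chernoff.
  - lra.
  - rewrite <- ln_1. apply ln_le; [lra|].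
    apply (Rle_div_r 1); [apply Rmult_lt_0_compat; lra | nra].
  - apply Rabs_sub_le_supnorm_shift. exact Hbdd.
  - intros t Ht. rewrite (Hc t Ht). ring.
Qed.
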